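(* Let $X$ be a set, $B=(B,+,0)$ a unitary magma and $(A,k,q,s,p)$ a retraction point from $X$ to $B$. Let $Z$ be a unitary magma and $g\colon Z\to B$ a morphism of unitary magmas, and let $A\times_B Z=\{(a,z)\in A\times Z\mid p(a)=g(z)\}$ (a sub-unitary-magma of the product $A\times Z$), with projections $\pi_1,\pi_2$. Then $$\big(A\times_B Z,\ \langle k,0\rangle,\ q\pi_1,\ \langle sg,1\rangle,\ \pi_2\big)$$ is a retraction point from $X$ to $Z$, where $\langle k,0\rangle(x)=(k(x),0)$ and $\langle sg,1\rangle(z)=(s(g(z)),z)$.
   Context: A unitary magma is a set with a binary operation $+$ and an element $0$ with $b+0=b=0+b$ for all $b$; morphisms preserve $+$ and $0$; the product $A\times Z$ has componentwise operation. Given a set $X$ and a unitary magma $B$, a retraction point from $X$ to $B$ is a tuple $(A,k,q,s,p)$ where $A=(A,+,0)$ is a unitary magma, $k\colon X\to A$ and $q\colon A\to X$ are maps, $s\colon B\to A$ and $p\colon A\to B$ are morphisms of unitary magmas, and $p(s(b))=b$, $q(k(x))=x$, $p(k(x))=0$, $q(s(b))=q(0)$, and $k(q(a))+s(p(a))=a$ for all $x\in X$, $b\in B$, $a\in A$. *)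

From Stdlib Require Import ProofIrrelevance.
Set Implicit Arguments.

Record UMagma := {
  car :> Type;
  op : car -> car -> car;
  zero : car;
  op_zero_r : forall b, op b zero = b;
  op_zero_l : forall b, op zero b = b
}.
Arguments op {u} _ _.
Arguments zero {u}.

Definition is_morph {A B : UMagma} (f : A -> B) : Prop :=
  (forall a a', f (op a a') = op (f a) (f a')) /\ f zero = zero.

Record is_retraction_point (X : Type) (B A : UMagma)
    (k : X -> A) (q : A -> X) (s : B -> A) (p : A -> B) : Prop := {
  rp_s_morph : @is_morph B A s;
  rp_p_morph : @is_morph A B p;
  rp_ps : forall b, p (s b) = b;
  rp_qk : forall x, q (k x) = x;
  rp_pk : forall x, p (k x) = zero;
  rp_qs : forall b, q (s b) = q zero;
  rp_split : forall a, op (k (q a)) (s (p a)) = a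
}.

Section Pullback.
Variables (A Z B : UMagma) (p : A -> B) (g : Z -> B).
Hypotheses (hp : @is_morph A B p) (hg : @is_morph Z B g).

Definition pb_car : Type := { az : A * Z | p (fst az) = g (snd az) }.

Lemma pb_op_closed (x y : pb_car) :
  p (op (fst (proj1_sig x)) (fst (proj1_sig y)))
  = g (op (snd (proj1_sig x)) (snd (proj1_sig y))).
Proof.
  destruct x as [[a z] e], y as [[a' z'] e']; simpl in *.
  rewrite (proj1 hp), (proj1 hg), e, e'. reflexivity.
Qed.

Definition pb_op (x y : pb_car) : pb_car :=
  exist _ (op (fst (proj1_sig x)) (fst (proj1_sig y)),
           op (snd (proj1_sig x)) (snd (proj1_sig y))) (pb_op_closed x y).

Lemma pb_zero_in : p (fst ((zero : A), (zero : Z))) = g (snd ((zero : A), (zero : Z))).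
Proof. simpl. rewrite (proj2 hp), (proj2 hg). reflexivity. Qed.

Definition pb_zero : pb_car := exist _ (zero, zero) pb_zero_in.

Lemma pb_op_zero_r (x : pb_car) : pb_op x pb_zero = x.
Proof.
  destruct x as [[a z] e]; unfold pb_op; simpl.
  apply eq_sig_hprop; [intros; apply proof_irrelevance|].
  simpl. rewrite !op_zero_r. reflexivity.
Qed.

Lemma pb_op_zero_l (x : pb_car) : pb_op pb_zero x = x.
Proof.
  destruct x as [[a z] e]; unfold pb_op; simpl.
  apply eq_sig_hprop; [intros; apply proof_irrelevance|].
  simpl. rewrite !op_zero_l. reflexivity.
Qed.

Definition pullback : UMagma :=
  {| car := pb_car; op := pb_op; zero := pb_zero;
     op_zero_r := pb_op_zero_r; op_zero_l := pb_op_zero_l |}.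

Definition pi1 (x : pullback) : A := fst (proj1_sig x).
Definition pi2 (x : pullback) : Z := snd (proj1_sig x).
End Pullback.

Section PullbackMaps.
Variables (X : Type) (B A Z : UMagma) (k : X -> A) (q : A -> X)
          (s : B -> A) (p : A -> B) (g : Z -> B).
Hypotheses (H : @is_retraction_point X B A k q s p) (hg : is_morph g).

Lemma pb_k_in (x : X) : p (fst (k x, (zero : Z))) = g (snd (k x, (zero : Z))).
Proof. simpl. rewrite (rp_pk H), (proj2 hg). reflexivity. Qed.

Definition pb_k (x : X) : pullback (rp_p_morph H) hg :=
  exist _ (k x, zero) (pb_k_in x).

Lemma pb_s_in (z : Z) : p (fst (s (g z), z)) = g (snd (s (g z), z)).
Proof. simpl. apply (rp_ps H). Qed.

Definition pb_s (z : Z) : pullback (rp_p_morph H) hg :=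
  exist _ (s (g z), z) (pb_s_in z).
End PullbackMaps.

From Stdlib Require Import ProofIrrelevance.

Section PullbackTheory.
Variables (A Z B : UMagma) (p : A -> B) (g : Z -> B).
Hypotheses (hp : is_morph p) (hg : is_morph g).

Lemma pullback_ext (w w' : pullback hp hg) :
  pi1 w = pi1 w' -> pi2 w = pi2 w' -> w = w'.
Proof.
  destruct w as [[a z] e], w' as [[a' z'] e']; unfold pi1, pi2; simpl.
  intros -> ->.
  apply eq_sig_hprop; [intros; apply proof_irrelevance | reflexivity].
Qed.

Lemma pi2_morph : is_morph (@pi2 A Z B p g hp hg).
Proof. split; reflexivity. Qed.

End PullbackTheory.

Section PullbackRetraction.
Variables (X : Type) (B A : UMagma) (k : X -> A) (q : A -> X)
          (s : B -> A) (p : A -> B) (Z : UMagma) (g : Z -> B).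
Hypotheses (H : @is_retraction_point X B A k q s p) (hg : is_morph g).

Lemma pb_s_morph : is_morph (pb_s H hg).
Proof.
  destruct (rp_s_morph H) as [s_op s_zero], hg as [g_op g_zero].
  split; [intros z z' |]; apply pullback_ext; unfold pi1; simpl; try reflexivity.
  - rewrite g_op; apply s_op.
  - rewrite g_zero; apply s_zero.
Qed.

(* For [w = (a, z)] in the pullback, [s (g z) = s (p a)], so the first
   component is the splitting of [a] in [A]. *)
Lemma pb_split (w : pullback (rp_p_morph H) hg) :
  op (pb_k H hg (q (pi1 w))) (pb_s H hg (pi2 w)) = w.
Proof.
  destruct w as [[a z] e]; apply pullback_ext; unfold pi1, pi2 in *; simpl in *.
  - rewrite <- e; apply (rp_split H).
  - apply op_zero_l.
Qed.

End PullbackRetraction.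

Theorem proposition2p2 (X : Type) (B A : UMagma)
    (k : X -> A) (q : A -> X) (s : B -> A) (p : A -> B)
    (H : @is_retraction_point X B A k q s p)
    (Z : UMagma) (g : Z -> B) (hg : @is_morph Z B g) :
  @is_retraction_point X Z (pullback (rp_p_morph H) hg)
    (pb_k H hg)
    (fun w => q (pi1 w))
    (pb_s H hg)
    (@pi2 A Z B p g (rp_p_morph H) hg).
Proof.
  split.
  - apply pb_s_morph.
  - apply pi2_morph.
  - reflexivity.
  - apply (rp_qk H).
  - reflexivity.
  - intro z; apply (rp_qs H).
  - apply pb_split.
Qed.
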